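(* Let $\mathscr{D}_n^B$ be the set of type $B_n$ derangements, and suppose the flag major index satisfies $$\sum_{\pi\in\mathscr{D}_n^B}q^{\mathrm{fmaj}(\pi)}=\sum_{0\le k\le n}(-1)^k q^{k(k-1)}[2n]_q[2n-2]_q\cdots[2k+2]_q$$ (empty product for $k=n$ equal to $1$). Then for every $m\ge 2$ and every $0\le r\le m-1$, $$\lim_{n\to\infty}\frac{\left|\{\pi\in\mathscr{D}_n^B:\ \mathrm{fmaj}(\pi)\equiv r\pmod m\}\right|}{|\mathscr{D}_n^B|}=\frac1m ,$$ i.e. the flag major index over $B_n$-derangements has the balanced property.
   Context: $[t]_q=1+q+\cdots+q^{t-1}$. A type $B_n$ permutation is a signed permutation $\pi$ of $[n]$ (a bijection $\pi$ of $\{\pm1,\dots,\pm n\}$ with $\pi(-i)=-\pi(i)$); a type $B_n$ derangement is one with $\pi(i)\ne i$ for all $1\le i\le n$. The flag major index is $\mathrm{fmaj}(\pi)=2\,\mathrm{maj}(\pi)+\mathrm{neg}(\pi)$ (Adin–Roichman), with $\mathrm{neg}(\pi)$ the number of negative entries; its generating function over $\mathscr{D}_n^B$ is the displayed formula. A statistic $\xi$ on sets $Q_n$ has the balanced property if for every $m\ge 2$ and every $0\le r\le m-1$, $\lim_{n\to\infty}|\{\pi\in Q_n:\xi(\pi)\equiv r \pmod m\}|/|Q_n| = 1/m$. *)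

From HB Require Import structures.
From mathcomp Require Import all_boot all_order all_fingroup all_algebra.
Set Implicit Arguments. Unset Strict Implicit. Unset Printing Implicit Defensive.
Import Order.TTheory GRing.Theory Num.Theory.

(* A type B_n (signed) permutation pi of [n] is encoded by a pair (s, e) with
   s : 'S_n and e : {ffun 'I_n -> bool}; in window notation
   pi(i+1) = (-1)^(e i) * (s i + 1) for i : 'I_n (0-based positions). *)
Definition signed_perm (n : nat) : finType :=
  ({perm 'I_n} * {ffun 'I_n -> bool})%type.

Definition sval n (p : signed_perm n) (i : 'I_n) : int :=
  if p.2 i then (- Posz (p.1 i).+1)%R else (Posz (p.1 i).+1)%R.

Definition derangementB n (p : signed_perm n) : bool :=
  [forall i : 'I_n, sval p i != Posz i.+1].

Definition DB (n : nat) : {set signed_perm n} := [set p | derangementB p].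

Definition neg n (p : signed_perm n) : nat := #|[set i : 'I_n | p.2 i]|.

(* value at 0-based position k (k < n), 0 outside the window *)
Definition svalnat n (p : signed_perm n) (k : nat) : int :=
  if insub k is Some i then sval p i else 0%R.

(* major index w.r.t. the usual order on integers:
   sum of positions j (1 <= j <= n-1) with pi(j) > pi(j+1)
   (pi(j) is at 0-based position j-1) *)
Definition maj n (p : signed_perm n) : nat :=
  \sum_(1 <= j < n)
     (if (svalnat p j < svalnat p j.-1)%R then j else 0%N).

Definition fmaj n (p : signed_perm n) : nat := (2 * maj p + neg p)%N.

Definition qint (t : nat) : {poly int} := (\sum_(i < t) 'X^i)%R.

From Pilot Require Import Defs.
From HB Require Import structures.
From mathcomp Require Import all_boot all_order all_fingroup all_algebra.
Import Order.TTheory GRing.Theory Num.Theory.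

Set Implicit Arguments.
Unset Strict Implicit.
Unset Printing Implicit Defensive.

Local Open Scope ring_scope.

(* Write the generating function as the alternating sum of the terms
   T_k = (-1)^k q^(k(k-1)) [2n]_q ... [2k+2]_q.  Whenever k <= n - m, some
   j in (k, k + m] is a multiple of m, so [m]_q divides [2j]_q and hence T_k;
   since the coefficients of [m]_q * h are spread evenly over the residues
   mod m, such a T_k puts exactly T_k(1)/m into each residue class.  Each of
   the m remaining terms is bounded at q = 1 by 2n (2n-2) ... (2n-2m+4),
   which is o(n!) and hence o(|D_n^B|), as negating all entries of a
   permutation gives a derangement. *)

Section CoefSumMod.
Variable R : nzRingType.
Implicit Types (p q : {poly R}) (m r : nat).

Definition coef_sum_mod m r p : R := \sum_(i < size p | (i %% m == r)%N) p`_i.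

Definition mod_defect m r p : R := coef_sum_mod m r p *+ m - p.[1].

Lemma coef_sum_mod_widen m r p N : (size p <= N)%N ->
  coef_sum_mod m r p = \sum_(i < N | (i %% m == r)%N) p`_i.
Proof.
move=> leN; rewrite /coef_sum_mod -(subnKC leN) big_split_ord /=.
by rewrite [X in _ = _ + X]big1 ?addr0 // => i _; rewrite nth_default ?leq_addr.
Qed.

Lemma coef_sum_modD m r : {morph coef_sum_mod m r : p q / p + q}.
Proof.
move=> p q; pose N := maxn (size p) (size q).
rewrite !(@coef_sum_mod_widen m r _ N) ?size_polyD ?leq_maxl ?leq_maxr //.
by rewrite -big_split; apply: eq_bigr => i _; rewrite coefD.
Qed.

Lemma coef_sum_mod0 m r : coef_sum_mod m r 0 = 0.
Proof. by rewrite /coef_sum_mod size_poly0 big_ord0. Qed.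

Lemma coef_sum_mod_sum m r I (s : seq I) (P : pred I) (F : I -> {poly R}) :
  coef_sum_mod m r (\sum_(i <- s | P i) F i) =
  \sum_(i <- s | P i) coef_sum_mod m r (F i).
Proof. exact: (big_morph _ (coef_sum_modD m r) (coef_sum_mod0 m r)). Qed.

Lemma coef_sum_modCM m r c p : coef_sum_mod m r (c%:P * p) = c * coef_sum_mod m r p.
Proof.
rewrite mul_polyC (@coef_sum_mod_widen m r _ (size p)) ?size_scale_leq //.
by rewrite mulr_sumr; apply: eq_bigr => i _; rewrite coefZ.
Qed.

Lemma coef_sum_modXn m r j : coef_sum_mod m r 'X^j = (j %% m == r)%N%:R.
Proof.
rewrite /coef_sum_mod size_polyXn big_mkcond big_ord_recr /= coefXn eqxx.
rewrite big1 ?add0r => [|i _]; first by case: ifP.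
by rewrite coefXn (ltn_eqF (ltn_ord i)); case: ifP.
Qed.

Lemma mod_defect_sum m r I (s : seq I) (P : pred I) (F : I -> {poly R}) :
  mod_defect m r (\sum_(i <- s | P i) F i) = \sum_(i <- s | P i) mod_defect m r (F i).
Proof.
by rewrite /mod_defect coef_sum_mod_sum horner_sum sumrB -sumrMnl.
Qed.

Lemma mod_defectCM m r c p : mod_defect m r (c%:P * p) = c * mod_defect m r p.
Proof. by rewrite /mod_defect coef_sum_modCM hornerCM mulrBr mulrnAr. Qed.

End CoefSumMod.

Section NonnegCoefs.
Variable R : numDomainType.
Implicit Types (p q : {poly R}).

Definition nonneg_coefs p := forall i, 0 <= p`_i.

Lemma nonneg_coefsXn j : nonneg_coefs ('X^j : {poly R}).
Proof. by move=> i; rewrite coefXn ler0n. Qed.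

Lemma nonneg_coefsM p q : nonneg_coefs p -> nonneg_coefs q -> nonneg_coefs (p * q).
Proof. by move=> p_ge0 q_ge0 i; rewrite coefM sumr_ge0 // => j _; rewrite mulr_ge0. Qed.

Lemma nonneg_coefs_prod I (s : seq I) (P : pred I) (F : I -> {poly R}) :
  (forall i, P i -> nonneg_coefs (F i)) -> nonneg_coefs (\prod_(i <- s | P i) F i).
Proof.
move=> F_ge0; apply: (big_ind nonneg_coefs) => //; last exact: nonneg_coefsM.
by move=> i; rewrite coefC; case: eqP.
Qed.

Lemma coef_sum_mod_ge0 m r p : nonneg_coefs p -> 0 <= coef_sum_mod m r p.
Proof. by move=> p_ge0; rewrite sumr_ge0. Qed.

Lemma coef_sum_mod_le_horner1 m r p : nonneg_coefs p -> coef_sum_mod m r p <= p.[1].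
Proof.
move=> p_ge0; rewrite /coef_sum_mod horner_coef.
rewrite [X in _ <= X](bigID (fun i : 'I_ _ => (i %% m == r)%N)) /=.
under [X in _ <= X + _]eq_bigr do rewrite expr1n mulr1.
by rewrite lerDl sumr_ge0 // => i _; rewrite expr1n mulr1.
Qed.

Lemma ler_norm_mod_defect m r p : nonneg_coefs p -> `|mod_defect m r p| <= p.[1] *+ m.+1.
Proof.
move=> p_ge0; have cs_ge0 := coef_sum_mod_ge0 m r p_ge0.
have p1_ge0 : 0 <= p.[1] := le_trans cs_ge0 (coef_sum_mod_le_horner1 m r p_ge0).
apply: le_trans (ler_normB _ _) _.
rewrite !ger0_norm ?mulrn_wge0 // mulrSr lerD2r lerMn2r.
by rewrite coef_sum_mod_le_horner1 ?orbT.
Qed.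

End NonnegCoefs.

Lemma horner_qint1 t : (qint t).[1] = t%:R.
Proof.
rewrite /qint horner_sum (eq_bigr (fun=> 1)) => [|i _]; last by rewrite hornerXn expr1n.
by rewrite sumr_const card_ord.
Qed.

Lemma qintD a b : qint (a + b) = qint a + 'X^a * qint b.
Proof.
rewrite /qint big_split_ord mulr_sumr /=; congr (_ + _).
by apply: eq_bigr => i _; rewrite exprD.
Qed.

Lemma qintM m c : qint (m * c) = qint m * \sum_(t < c) 'X^(m * t).
Proof.
elim: c => [|c IHc]; first by rewrite muln0 big_ord0 mulr0 /qint big_ord0.
by rewrite mulnS addnC qintD IHc big_ord_recr /= mulrDr [_ * qint m]mulrC.
Qed.

Lemma nonneg_coefs_qint t : nonneg_coefs (qint t).
Proof. by move=> i; rewrite /qint coef_sum sumr_ge0 // => j _; apply: nonneg_coefsXn. Qed.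

Lemma sum_residue_window m r c : (r < m)%N ->
  (\sum_(i < m) ((c + i) %% m == r))%N = 1%N.
Proof.
move=> lt_rm; elim: c => [|c IHc].
  rewrite (bigD1 (Ordinal lt_rm)) //= add0n modn_small // eqxx big1 // => i ne_ir.
  rewrite add0n modn_small //; case: eqP => // eq_ir.
  by move: ne_ir; rewrite -val_eqE /= eq_ir eqxx.
case: m lt_rm IHc => // m lt_rm IHc.
rewrite -IHc big_ord_recr big_ord_recl /= addn0 addSnnS -{3}[m.+1]add0n modnDr.
by rewrite addnC; congr (_ + _)%N; apply: eq_bigr => i _; rewrite /bump /= add1n addnS.
Qed.

Lemma coef_sum_mod_Xn_qint m r c : (r < m)%N -> coef_sum_mod m r ('X^c * qint m) = 1.
Proof.
move=> lt_rm; rewrite /qint mulr_sumr coef_sum_mod_sum.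
under eq_bigr do rewrite -exprD coef_sum_modXn.
by rewrite -natr_sum sum_residue_window.
Qed.

Lemma coef_sum_mod_Xn_qintM m r a h : (r < m)%N ->
  coef_sum_mod m r ('X^a * qint m * h) = h.[1].
Proof.
move=> lt_rm; rewrite -{1}[h]coefK poly_def mulr_sumr coef_sum_mod_sum horner_coef.
apply: eq_bigr => i _; rewrite expr1n mulr1 -mul_polyC mulrCA.
have -> : 'X^a * qint m * 'X^i = 'X^(a + i) * qint m by rewrite exprD mulrAC.
by rewrite coef_sum_modCM coef_sum_mod_Xn_qint ?mulr1.
Qed.

Definition even_prod n k : nat := \prod_(k.+1 <= j < n.+1) (2 * j).

Definition unsigned_term n k : {poly int} :=
  'X^(k * k.-1) * \prod_(k.+1 <= j < n.+1) qint (2 * j).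

Definition signed_term n k : {poly int} := ((-1) ^+ k)%:P * unsigned_term n k.

Lemma signed_termE n k :
  (-1) ^+ k * 'X^(k * k.-1) * \prod_(k.+1 <= j < n.+1) qint (2 * j) = signed_term n k.
Proof. by rewrite /signed_term /unsigned_term polyC_exp polyCN polyC1 mulrA. Qed.

Lemma nonneg_coefs_unsigned_term n k : nonneg_coefs (unsigned_term n k).
Proof.
apply: nonneg_coefsM; first exact: nonneg_coefsXn.
by apply: nonneg_coefs_prod => j _; apply: nonneg_coefs_qint.
Qed.

Lemma horner1_unsigned_term n k : (unsigned_term n k).[1] = (even_prod n k)%:R.
Proof.
rewrite hornerM hornerXn expr1n mul1r horner_prod natr_prod.
by apply: eq_bigr => j _; rewrite horner_qint1.
Qed.

(* Some multiple j of m lies in (k, k + m], and [2j]_q = [m]_q * [2j/m]_(q^m). *)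
Lemma qint_dvd_prod n k m : (0 < m)%N -> (k + m <= n)%N ->
  exists h, \prod_(k.+1 <= j < n.+1) qint (2 * j) = qint m * h.
Proof.
move=> m_gt0 le_kmn; pose j0 := ((k %/ m).+1 * m)%N.
have lt_kj0 : (k < j0)%N by apply: ltn_ceil.
have le_j0n : (j0 <= n)%N.
  by apply: leq_trans le_kmn; rewrite /j0 mulSn addnC leq_add2r leq_trunc_div.
rewrite (big_cat_nat _ (n := j0)) ?(leqW le_j0n) // (big_ltn (m := j0)) //=.
have -> : (2 * j0 = m * (2 * (k %/ m).+1))%N by rewrite /j0 mulnA mulnC.
by rewrite qintM mulrCA -!mulrA; eexists.
Qed.

Lemma mod_defect_unsigned_term_eq0 m r n k : (r < m)%N -> (k + m <= n)%N ->
  mod_defect m r (unsigned_term n k) = 0.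
Proof.
move=> lt_rm le_kmn; rewrite /mod_defect /unsigned_term.
have [h ->] := qint_dvd_prod (leq_ltn_trans (leq0n r) lt_rm) le_kmn.
rewrite mulrA coef_sum_mod_Xn_qintM // !hornerM hornerXn expr1n mul1r horner_qint1.
by rewrite mulr_natl subrr.
Qed.

Lemma leq_even_prod n a k : (a <= k)%N -> (k <= n)%N ->
  (even_prod n k <= even_prod n a)%N.
Proof.
move=> le_ak le_kn; rewrite /even_prod [X in (_ <= X)%N](big_cat_nat _ (n := k.+1)) //=.
apply: leq_pmull; rewrite big_nat_cond prodn_cond_gt0 // => j /andP[/andP[lt_aj _] _].
by rewrite muln_gt0 (leq_trans _ lt_aj).
Qed.

Lemma ler_norm_mod_defect_signed_term m r n k :
  `|mod_defect m r (signed_term n k)| <= (even_prod n k)%:R *+ m.+1.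
Proof.
rewrite mod_defectCM normrM normrX normrN1 expr1n mul1r -horner1_unsigned_term.
exact/ler_norm_mod_defect/nonneg_coefs_unsigned_term.
Qed.

Lemma ler_norm_mod_defect_sum_signed_term m r n : (r < m)%N -> (m <= n)%N ->
  `|mod_defect m r (\sum_(k < n.+1) signed_term n k)|
    <= (even_prod n (n.+1 - m))%:R *+ (m.+1 * m).
Proof.
move=> lt_rm le_mn; rewrite mod_defect_sum.
rewrite -(big_mkord xpredT (fun k => mod_defect m r (signed_term n k))).
rewrite (big_cat_nat _ (n := n.+1 - m)) ?leq_subr //= big1_seq ?add0r; last first.
  move=> k /andP[_]; rewrite mem_index_iota ltn_subRL ltnS addnC => /andP[_ le_kmn].
  by rewrite mod_defectCM mod_defect_unsigned_term_eq0 ?mulr0.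
apply: le_trans (ler_norm_sum _ _ _) _.
rewrite mulrnA -[m in _ *+ m](subKn (leqW le_mn)) -sumr_const_nat.
rewrite big_seq_cond [X in _ <= X]big_seq_cond; apply: ler_sum => k.
rewrite andbT mem_index_iota => /andP[le_ak lt_kn].
apply: le_trans (ler_norm_mod_defect_signed_term m r n k) _.
by rewrite lerMn2r ler_nat leq_even_prod ?orbT.
Qed.

Lemma card_fmaj_mod n m r :
  #|[set p in DB n | (fmaj p %% m == r)%N]|%:R =
  coef_sum_mod m r (\sum_(p in DB n) 'X^(fmaj p) : {poly int}).
Proof.
rewrite coef_sum_mod_sum; under eq_bigr do rewrite coef_sum_modXn.
by rewrite -natr_sum -big_mkcondr /= sum1_card cardsE.
Qed.

Lemma card_DB_horner1 n : #|DB n|%:R = (\sum_(p in DB n) 'X^(fmaj p) : {poly int}).[1].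
Proof.
rewrite horner_sum (eq_bigr (fun=> 1)) => [|p _]; last by rewrite hornerXn expr1n.
by rewrite sumr_const.
Qed.

Lemma fact_leq_card_DB n : (n`! <= #|DB n|)%N.
Proof.
pose negate (s : {perm 'I_n}) : signed_perm n := (s, [ffun => true]).
have negate_inj : injective negate by move=> s t [].
rewrite -card_Sn -cardsT -(card_imset _ negate_inj) subset_leq_card //.
apply/subsetP => _ /imsetP[s _ ->]; rewrite inE; apply/forallP => i.
by rewrite /Defs.sval /= ffunE.
Qed.

Lemma even_prod_fact n a : (a <= n)%N -> (even_prod n a * a`! = 2 ^ (n - a) * n`!)%N.
Proof.
move=> le_an; rewrite (fact_prod n) (big_cat_nat _ (n := a.+1)) //= -fact_prod.
by rewrite /even_prod big_split /= prod_nat_const_nat subSS -mulnA [(a`! * _)%N]mulnC.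
Qed.

Lemma even_prod_tail_le n m : (0 < m)%N -> (m <= n)%N ->
  (even_prod n (n.+1 - m) * (n.+1 - m) <= 2 ^ m * #|DB n|)%N.
Proof.
move=> m_gt0 le_mn; set a := (n.+1 - m)%N.
have le_an : (a <= n)%N by rewrite /a leq_subLR -addn1 addnC leq_add2r.
apply: leq_trans (leq_mul (leqnn _) (fact_geq a)) _.
rewrite even_prod_fact // leq_mul ?fact_leq_card_DB // leq_pexp2l //.
by rewrite leq_subLR /a subnK ?leqW.
Qed.

Lemma ler_norm_natB (R : realDomainType) (x y e : nat) :
  (`|x%:R - y%:R : R| <= e%:R) = ((x <= y + e) && (y <= x + e))%N.
Proof.
rewrite ler_norml lerBlDr -natrD ler_nat andbC; congr (_ && _).
  by rewrite addnC.
by rewrite -opprB lerN2 lerBlDr -natrD ler_nat addnC.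
Qed.

Lemma ltr_nat_scaled (R : realFieldType) (x y a b : nat) (eps : R) : (0 < y)%N ->
  (x * a <= b * y)%N -> b%:R < eps * a%:R -> x%:R < eps * y%:R.
Proof.
move=> y_gt0 le_xa_by lt_b_epsa.
have a_gt0 : (0 < a)%N.
  by case: a lt_b_epsa {le_xa_by} => //; rewrite mulr0 ltNge ler0n.
rewrite -(ltr_pM2r (_ : 0 < a%:R)) ?ltr0n //.
apply: le_lt_trans (_ : _ <= (b * y)%:R) _; first by rewrite -natrM ler_nat.
by rewrite natrM mulrAC ltr_pM2r ?ltr0n.
Qed.

Lemma ratio_near_inv (R : realFieldType) (c d m e : nat) (eps : R) :
  (0 < m)%N -> (0 < d)%N -> (c * m <= d + e)%N -> (d <= c * m + e)%N ->
  e%:R < eps * (d * m)%:R -> `|c%:R / d%:R - m%:R^-1| < eps.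
Proof.
move=> m_gt0 d_gt0 le_cm le_d lt_e.
have m_neq0 : (m%:R : R) != 0 by rewrite pnatr_eq0 -lt0n.
have d_neq0 : (d%:R : R) != 0 by rewrite pnatr_eq0 -lt0n.
have -> : c%:R / d%:R - m%:R^-1 = ((c * m)%:R - d%:R) / (d * m)%:R :> R.
  by rewrite !natrM invfM mulrBl mulrACA divff // mulr1 mulrA divff // mul1r.
rewrite normrM normfV normr_nat ltr_pdivrMr ?ltr0n ?muln_gt0 ?m_gt0 ?d_gt0 //.
by apply: le_lt_trans lt_e; rewrite ler_norm_natB le_cm le_d.
Qed.

Theorem mainTheorem7 :
  (forall n : nat,
     (\sum_(p in DB n) 'X^(fmaj p) : {poly int})%R =
     (\sum_(k < n.+1) (-1) ^+ k * 'X^(k * k.-1) *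
        \prod_(k.+1 <= j < n.+1) qint (2 * j))%R) ->
  forall m r : nat, (2 <= m)%N -> (r <= m - 1)%N ->
  forall eps : rat, (0 < eps)%R ->
  exists N : nat, forall n : nat, (N <= n)%N ->
    (`| (#|[set p in DB n | (fmaj p %% m)%N == r]|%:R / #|DB n|%:R : rat)
        - m%:R^-1 | < eps)%R.
Proof.
move=> gf m r le2m le_r eps eps_gt0.
have m_gt0 : (0 < m)%N by apply: leq_trans le2m.
have lt_rm : (r < m)%N by rewrite (leq_ltn_trans le_r) // subn1 ltn_predL.
pose b := (m.+1 * 2 ^ m)%N.
have [K lt_bK] : exists K : nat, b%:R / eps < K%:R.
  exists (Num.Def.archi_bound (b%:R / eps)).
  by apply: archi_boundP; rewrite divr_ge0 ?ler0n ?ltW.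
exists (K + m)%N => n le_n.
have le_mn : (m <= n)%N by rewrite (leq_trans _ le_n) ?leq_addl.
have := ler_norm_mod_defect_sum_signed_term lt_rm le_mn.
have -> : \sum_(k < n.+1) signed_term n k = \sum_(p in DB n) 'X^(fmaj p).
  by rewrite gf; apply: eq_bigr => k _; rewrite signed_termE.
rewrite /mod_defect -card_fmaj_mod -card_DB_horner1 -!mulrnA ler_norm_natB.
have DB_gt0 : (0 < #|DB n|)%N := leq_trans (fact_gt0 n) (fact_leq_card_DB n).
case/andP=> le_cm le_d; apply: (ratio_near_inv m_gt0 DB_gt0 le_cm le_d).
apply: (@ltr_nat_scaled _ _ _ (n.+1 - m) b).
- by rewrite muln_gt0 m_gt0 DB_gt0.
- have := leq_mul (even_prod_tail_le m_gt0 le_mn) (leqnn (m.+1 * m)).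
  by rewrite mulnAC /b [(_ * 2 ^ m)%N]mulnC -!mulnA [(#|_| * _)%N]mulnCA.
- rewrite mulrC -ltr_pdivrMr // (lt_le_trans lt_bK) // ler_nat.
  by rewrite ltnW // ltn_subRL addnC ltnS.
Qed.
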